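(* Let $\mathcal Q=(\mathcal G,\mathcal C)$ be a CWS code in standard form with $K=|\mathcal C|>1$, and suppose the $j$-th bit is involved in $\mathcal C$. Then the graph-stabilizer generator $S_j=X_jZ^{\mathbf r_j}$ is not detectable by $\mathcal Q$. Consequently the distance of $\mathcal Q$ is at most $\mathrm{wgt}(S_j)=1+\deg_{\mathcal G}(j)$.
   Context: A Pauli operator on $n$ qubits is, up to a phase, $X^{\mathbf v}Z^{\mathbf u}=X_1^{v_1}\cdots X_n^{v_n}Z_1^{u_1}\cdots Z_n^{u_n}$ with $\mathbf v,\mathbf u\in\{0,1\}^n$; its weight is the number of qubits on which it acts as a non-identity operator. For a subspace $\mathcal Q\subseteq(\mathbb C^2)^{\otimes n}$ with orthonormal basis $\{|i\rangle\}$, a Pauli operator $E$ is detectable if $\langle j|E|i\rangle=C_E\delta_{ij}$ for all $i,j$, with $C_E$ independent of $i,j$; the distance of $\mathcal Q$ is the smallest weight of a non-detectable Pauli operator. Let $\mathcal G$ be a simple graph on vertex set $\{1,\dots,n\}$ with adjacency matrix $R\in\{0,1\}^{n\times n}$ (symmetric, zero diagonal) and rows $\mathbf r_i$. The graph-stabilizer generators are $S_i=X_iZ^{\mathbf r_i}$, $i=1,\dots,n$; they commute, generate an abelian group $\mathscr S_{\mathcal G}$, and stabilize a unique (up to phase) state $|s\rangle$, the graph state. For a binary code $\mathcal C\subseteq\{0,1\}^n$ with $K$ words, the CWS code in standard form is $\mathcal Q=(\mathcal G,\mathcal C)=\operatorname{span}\{Z^{\mathbf c}|s\rangle:\mathbf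 c\in\mathcal C\}$; it has dimension $K$. The $j$-th bit is involved in $\mathcal C$ if there exist $\mathbf c_1,\mathbf c_2\in\mathcal C$ whose $j$-th coordinates differ. *)

From HB Require Import structures.
From mathcomp Require Import all_boot all_order all_algebra all_field.
Set Implicit Arguments. Unset Strict Implicit. Unset Printing Implicit Defensive.
Import GRing.Theory Num.Theory.
Local Open Scope ring_scope.

Definition bits (n : nat) := {ffun 'I_n -> bool}.

(* a vector of (C^2)^{(x)n}, given by its coordinates in the computational basis |x> *)
Definition state (n : nat) := bits n -> algC.

Definition zerov (n : nat) : bits n := [ffun _ => false].
Definition xorv (n : nat) (x v : bits n) : bits n := [ffun i => x i (+) v i].
Definition unitvec (n : nat) (j : 'I_n) : bits n := [ffun i => i == j].
(* u . x over GF(2), as a natural number (only its parity matters) *)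
Definition dotb (n : nat) (u x : bits n) : nat := #|[set i | u i && x i]|.

(* The Pauli operator X^v Z^u (Z^u applied first, then X^v):
   Z^u |x> = (-1)^{u.x} |x>,  X^v |x> = |x + v>. *)
Definition pauli (n : nat) (v u : bits n) (psi : state n) : state n :=
  fun x => (-1) ^+ dotb u (xorv x v) * psi (xorv x v).

Definition weight (n : nat) (v u : bits n) : nat := #|[set i | v i || u i]|.

Definition inner (n : nat) (a b : state n) : algC :=
  \sum_(x : bits n) (a x)^* * b x.

Definition simple_graph (n : nat) (R : 'I_n -> 'I_n -> bool) : Prop :=
  (forall i k, R i k = R k i) /\ (forall i, R i i = false).

Definition adj_row (n : nat) (R : 'I_n -> 'I_n -> bool) (i : 'I_n) : bits n :=
  [ffun k => R i k].

Definition degree (n : nat) (R : 'I_n -> 'I_n -> bool) (j : 'I_n) : nat :=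
  #|[set k | R j k]|.

(* s is (a normalized representative of) the graph state of R:
   stabilized by every S_i = X_i Z^{r_i}. *)
Definition is_graph_state (n : nat) (R : 'I_n -> 'I_n -> bool) (s : state n) : Prop :=
  inner s s = 1 /\
  forall (i : 'I_n) (x : bits n), pauli (unitvec i) (adj_row R i) s x = s x.

(* basis vector Z^c |s> of the CWS code (G, C) *)
Definition cws_basis (n : nat) (s : state n) (c : bits n) : state n :=
  pauli (zerov n) c s.

(* X^v Z^u is detectable by Q = span{Z^c|s> : c in C}:
   <c'|E|c> = C_E delta_{c c'} for all basis vectors. *)
Definition detectable (n : nat) (s : state n) (C : {set bits n}) (v u : bits n) : Prop :=
  exists CE : algC, forall c c' : bits n, c \in C -> c' \in C ->
    inner (cws_basis s c') (pauli v u (cws_basis s c)) = (if c == c' then CE else 0).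

Definition is_distance (n : nat) (s : state n) (C : {set bits n}) (d : nat) : Prop :=
  (exists v u : bits n, weight v u = d /\ ~ detectable s C v u) /\
  (forall v u : bits n, (weight v u < d)%N -> detectable s C v u).

Definition involved (n : nat) (C : {set bits n}) (j : 'I_n) : Prop :=
  exists c1 c2 : bits n, c1 \in C /\ c2 \in C /\ c1 j != c2 j.

From HB Require Import structures.
From mathcomp Require Import all_boot all_order all_algebra all_field.
From mathcomp Require Import ring.
Set Implicit Arguments. Unset Strict Implicit. Unset Printing Implicit Defensive.
Import GRing.Theory Num.Theory.
Local Open Scope ring_scope.

(* Write sgn(k) = (-1)^k.  Since Z^u |x> = sgn(u.x) |x> and the
   parity u.x is additive in x, conjugating by Z^c turns a Pauli X^v Z^u into
   sgn(c.v) X^v Z^u.  Hence, if X^v Z^u stabilizes the state |s>, each basis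
   vector Z^c |s> of the CWS code is an eigenvector of X^v Z^u with eigenvalue
   sgn(c.v), and its expectation value is <c|X^v Z^u|c> = sgn(c.v) <s|s>.
   For S_j = X_j Z^{r_j} we have c.e_j = c_j, so if the j-th bit is involved
   in C two code words give the different diagonal values 1 and -1: S_j is
   not detectable.  Its weight is 1 + deg(j) because r_j has a zero at j, and
   a non-detectable Pauli of weight w bounds the distance by w. *)

Section SignCalculus.
Variable n : nat.
Implicit Types u v x : bits n.

Lemma sign_dotb u x :
  (-1) ^+ dotb u x = \prod_i ((-1) ^+ (u i && x i) : algC).
Proof.
rewrite /dotb -prodr_const [RHS](bigID (fun i => u i && x i)) /=.
rewrite [X in _ = _ * X]big1 ?mulr1; last by move=> i /negbTE ->.
by apply: eq_big => i; rewrite inE // => ->.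
Qed.

Lemma sign_dotb_xor u x v :
  (-1) ^+ dotb u (xorv x v) = ((-1) ^+ dotb u x * (-1) ^+ dotb u v : algC).
Proof.
rewrite !sign_dotb -big_split /=; apply: eq_bigr => i _.
rewrite /xorv ffunE -signr_addb.
by case: (u i); case: (x i); case: (v i).
Qed.

Lemma dotb_unitvec u (j : 'I_n) : dotb u (unitvec j) = u j.
Proof.
rewrite /dotb; case uj: (u j) => /=.
  rewrite -(cards1 j); apply: eq_card => i.
  by rewrite !inE ffunE; case: eqP => [->|]; rewrite ?uj ?andbF.
rewrite -(cards0 'I_n); apply: eq_card => i.
by rewrite !inE ffunE; case: eqP => [->|]; rewrite ?uj ?andbF.
Qed.

Lemma xorv0 x : xorv x (zerov n) = x.
Proof. by apply/ffunP => i; rewrite /xorv /zerov !ffunE addbF. Qed.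

End SignCalculus.

Section CodeVectors.
Variable n : nat.
Implicit Types (s : state n) (c v u : bits n).

Lemma cws_basisE s c x : cws_basis s c x = (-1) ^+ dotb c x * s x.
Proof. by rewrite /cws_basis /pauli xorv0. Qed.

Lemma inner_scaler s1 s2 (k : algC) :
  inner s1 (fun x => k * s2 x) = k * inner s1 s2.
Proof. by rewrite /inner mulr_sumr; apply: eq_bigr => x _; ring. Qed.

(* Z^c is unitary: all code vectors have the norm of |s>. *)
Lemma inner_cws_basis s c : inner (cws_basis s c) (cws_basis s c) = inner s s.
Proof.
apply: eq_bigr => x _; rewrite cws_basisE rmorphM rmorphXn rmorphN1 /=.
by rewrite mulrACA -expr2 sqrr_sign mul1r.
Qed.

(* Z^c X^v Z^u = sgn(c.v) X^v Z^u Z^c: if X^v Z^u stabilizes |s>, then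
   Z^c |s> is an eigenvector of X^v Z^u with eigenvalue sgn(c.v). *)
Lemma pauli_cws_basis s c v u :
  (forall x, pauli v u s x = s x) ->
  forall x, pauli v u (cws_basis s c) x = (-1) ^+ dotb c v * cws_basis s c x.
Proof.
move=> stab x; rewrite cws_basisE -stab /pauli cws_basisE !sign_dotb_xor.
ring.
Qed.

Lemma stabilizer_expectation s c v u :
  (forall x, pauli v u s x = s x) ->
  inner (cws_basis s c) (pauli v u (cws_basis s c))
    = (-1) ^+ dotb c v * inner s s.
Proof.
move=> stab; rewrite -(inner_cws_basis s c) -inner_scaler.
by apply: eq_bigr => x _; rewrite pauli_cws_basis.
Qed.

Lemma stabilizer_not_detectable s (C : {set bits n}) v u c1 c2 :
  inner s s = 1 -> (forall x, pauli v u s x = s x) ->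
  c1 \in C -> c2 \in C -> odd (dotb c1 v) != odd (dotb c2 v) ->
  ~ detectable s C v u.
Proof.
move=> norm1 stab Cc1 Cc2 parity [CE detE].
have := detE c1 c1 Cc1 Cc1; have := detE c2 c2 Cc2 Cc2.
rewrite !eqxx !stabilizer_expectation // norm1 !mulr1 => <-.
rewrite -signr_odd -[RHS]signr_odd => /signr_inj same_parity.
by move: parity; rewrite same_parity eqxx.
Qed.

Lemma distance_le_weight s (C : {set bits n}) v u d :
  ~ detectable s C v u -> is_distance s C d -> (d <= weight v u)%N.
Proof.
move=> nodet [_ below]; rewrite leqNgt; apply/negP => lt_w_d.
exact/nodet/below.
Qed.

End CodeVectors.

(* S_j acts on qubit j (as X_j) and on the neighbours of j (as Z);
   these are disjoint because the graph has no loops. *)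
Lemma weight_graph_stabilizer (n : nat) (R : 'I_n -> 'I_n -> bool) (j : 'I_n) :
  R j j = false -> weight (unitvec j) (adj_row R j) = (1 + degree R j)%N.
Proof.
move=> Rjj; rewrite /weight /degree.
have -> : [set i | unitvec j i || adj_row R j i] = j |: [set k | R j k].
  by apply/setP => i; rewrite !inE /unitvec /adj_row !ffunE.
by rewrite cardsU1 inE Rjj.
Qed.

Theorem lemma3 (n : nat) (R : 'I_n -> 'I_n -> bool) (s : state n)
    (C : {set bits n}) (j : 'I_n) :
  simple_graph R ->
  is_graph_state R s ->
  (1 < #|C|)%N ->
  involved C j ->
  ~ detectable s C (unitvec j) (adj_row R j) /\
  weight (unitvec j) (adj_row R j) = (1 + degree R j)%N /\
  (forall d : nat, is_distance s C d -> (d <= 1 + degree R j)%N).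
Proof.
move=> [_ Rirr] [norm1 stab] _ [c1 [c2 [Cc1 [Cc2 c12j]]]].
have nodet : ~ detectable s C (unitvec j) (adj_row R j).
  apply: (stabilizer_not_detectable norm1 (stab j) Cc1 Cc2).
  by rewrite !dotb_unitvec !oddb.
have wS := weight_graph_stabilizer (Rirr j).
split; first exact: nodet.
split=> [|d dist]; first exact: wS.
by rewrite -wS; apply: distance_le_weight nodet dist.
Qed.
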